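(* In the setting of 2D Toom-Cook convolution described in the context, if every dot product in the linear transforms is computed by linear (recursive) summation of the rounded products, with arbitrary matrix entries, then $$|\hat S-S|\le |A^T|\big(|G|\,|H|\,|G^T|\odot|B^T|\,|X|\,|B|\big)|A|\,(2n_h+4n+7)\varepsilon+O(\varepsilon^2)$$ and $$\|\hat S-S\|_1\le \|A^T\|_1\|G\|_F\|H\|_F\|G^T\|_F\|B^T\|_F\|X\|_F\|B\|_F\|A\|_1\,(2n_h+4n+7)\varepsilon+O(\varepsilon^2).$$
   Context: $n=n_o+n_h-1$, $p_1,\dots,p_n$ distinct reals, $N_i=1/\prod_{j\ne i}(p_i-p_j)$, $M_{i,j}$ the coefficient of $a^{j-1}$ in $\prod_{k\ne i}(a-p_k)$; $A^T\in\mathbb{R}^{n_o\times n}$, $A^T_{i,j}=p_j^{i-1}$; $G\in\mathbb{R}^{n\times n_h}$, $G_{i,j}=p_i^{j-1}N_i$; $B^T\in\mathbb{R}^{n\times n}$, $B^T_{i,j}=M_{j,i}$. For $H\in F^{n_h\times n_h}$, $X\in F^{n\times n}$, $S=A^T(GHG^T\odot B^TXB)A$ is exact, and $\hat S$ is computed as $U=fl(fl(G)Hfl(G^T))$, $V=fl(fl(B^T)Xfl(B))$, $W_{ij}=fl(U_{ij}V_{ij})$, $\hat S=fl(fl(A^T)Wfl(A))$. Floating point model: unit roundoff $\varepsilon$, no overflow, each elementary operation and each stored constant incurs relative error at most $\varepsilon$. $\odot$ Hadamard product, $|\cdot|$ entrywise absolute value, $\|\cdot\|_1$ induced matrix 1-norm,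 $\|\cdot\|_F$ Frobenius norm. *)

(* Real numbers are modelled by an arbitrary real closed field R
   (rcfType), which contains the needed square root for the Frobenius norm. *)
From HB Require Import structures.
From mathcomp Require Import all_boot all_order all_algebra.
Set Implicit Arguments. Unset Strict Implicit. Unset Printing Implicit Defensive.
Import Order.TTheory GRing.Theory Num.Theory.
Local Open Scope ring_scope.

Section TC.
Variable R : rcfType.

Definition tcn (no nh : nat) : nat := (no + nh).-1.

Definition tcN (n : nat) (p : 'I_n -> R) (i : 'I_n) : R :=
  (\prod_(k < n | k != i) (p i - p k))^-1.

Definition tcM (n : nat) (p : 'I_n -> R) (i j : 'I_n) : R :=
  (\prod_(k < n | k != i) ('X - (p k)%:P) : {poly R})`_j.

Definition tcAT (no nh : nat) (p : 'I_(tcn no nh) -> R) : 'M[R]_(no, tcn no nh) :=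
  \matrix_(i < no, j < tcn no nh) p j ^+ i.
Definition tcG (no nh : nat) (p : 'I_(tcn no nh) -> R) : 'M[R]_(tcn no nh, nh) :=
  \matrix_(i < tcn no nh, j < nh) (p i ^+ j * tcN p i).
Definition tcBT (no nh : nat) (p : 'I_(tcn no nh) -> R) : 'M[R]_(tcn no nh) :=
  \matrix_(i < tcn no nh, j < tcn no nh) tcM p j i.

Definition hadamard (m k : nat) (U V : 'M[R]_(m, k)) : 'M[R]_(m, k) :=
  \matrix_(i, j) (U i j * V i j).

Definition tcS (no nh : nat) (p : 'I_(tcn no nh) -> R)
    (H : 'M[R]_nh) (X : 'M[R]_(tcn no nh)) : 'M[R]_no :=
  tcAT p *m hadamard (tcG p *m H *m (tcG p)^T) ((tcBT p) *m X *m (tcBT p)^T)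
    *m (tcAT p)^T.

(* Rounding of a value x with relative error d : fl(x) = x (1 + d), |d| <= eps. *)
Definition rnd (x d : R) : R := x * (1 + d).

(* Linear (recursive) summation: given the terms y_1..y_k, each paired with the
   relative error d_l of the addition that adds y_l (unused for l = 1),
   s_1 = y_1, s_l = fl(s_{l-1} + y_l) = (s_{l-1} + y_l)(1 + d_l). *)
Definition lsum (s : seq (R * R)) : R :=
  match s with
  | [::] => 0
  | yd :: t => foldl (fun acc yd' => rnd (acc + yd'.1) yd'.2) yd.1 t
  end.

(* Floating-point matrix product: each entry is a dot product computed by
   linear summation of the rounded products;
   dm i j l : relative error of the product A_{il} B_{lj},
   da i j l : relative error of the addition of the l-th term. *)
Definition flmul (m k q : nat) (A : 'M[R]_(m, k)) (B : 'M[R]_(k, q))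
    (dm da : 'I_m -> 'I_q -> 'I_k -> R) : 'M[R]_(m, q) :=
  \matrix_(i, j) lsum [seq (rnd (A i l * B l j) (dm i j l), da i j l) | l <- enum 'I_k].

Definition flmx (m k : nat) (A E : 'M[R]_(m, k)) : 'M[R]_(m, k) :=
  \matrix_(i, j) rnd (A i j) (E i j).

Record tc_err (no nh : nat) := TcErr {
  eAT : 'M[R]_(no, tcn no nh);
  eA  : 'M[R]_(tcn no nh, no);
  eG  : 'M[R]_(tcn no nh, nh);
  eGT : 'M[R]_(nh, tcn no nh);
  eBT : 'M[R]_(tcn no nh);
  eB  : 'M[R]_(tcn no nh);
  mGH : 'I_(tcn no nh) -> 'I_nh -> 'I_nh -> R;
  aGH : 'I_(tcn no nh) -> 'I_nh -> 'I_nh -> R;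
  mU  : 'I_(tcn no nh) -> 'I_(tcn no nh) -> 'I_nh -> R;
  aU  : 'I_(tcn no nh) -> 'I_(tcn no nh) -> 'I_nh -> R;
  mBX : 'I_(tcn no nh) -> 'I_(tcn no nh) -> 'I_(tcn no nh) -> R;
  aBX : 'I_(tcn no nh) -> 'I_(tcn no nh) -> 'I_(tcn no nh) -> R;
  mV  : 'I_(tcn no nh) -> 'I_(tcn no nh) -> 'I_(tcn no nh) -> R;
  aV  : 'I_(tcn no nh) -> 'I_(tcn no nh) -> 'I_(tcn no nh) -> R;
  eW  : 'M[R]_(tcn no nh);
  mAW : 'I_no -> 'I_(tcn no nh) -> 'I_(tcn no nh) -> R;
  aAW : 'I_no -> 'I_(tcn no nh) -> 'I_(tcn no nh) -> R;
  mS  : 'I_no -> 'I_no -> 'I_(tcn no nh) -> R;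
  aS  : 'I_no -> 'I_no -> 'I_(tcn no nh) -> R
}.

Definition mx_bounded (m k : nat) (eps : R) (E : 'M[R]_(m, k)) : Prop :=
  forall i j, `|E i j| <= eps.
Definition arr_bounded (m k q : nat) (eps : R) (E : 'I_m -> 'I_k -> 'I_q -> R) : Prop :=
  forall i j l, `|E i j l| <= eps.

Definition err_bounded (no nh : nat) (eps : R) (e : tc_err no nh) : Prop :=
  mx_bounded eps (eAT e) /\ mx_bounded eps (eA e) /\ mx_bounded eps (eG e) /\
  mx_bounded eps (eGT e) /\ mx_bounded eps (eBT e) /\ mx_bounded eps (eB e) /\
  mx_bounded eps (eW e) /\
  arr_bounded eps (mGH e) /\ arr_bounded eps (aGH e) /\
  arr_bounded eps (mU e) /\ arr_bounded eps (aU e) /\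
  arr_bounded eps (mBX e) /\ arr_bounded eps (aBX e) /\
  arr_bounded eps (mV e) /\ arr_bounded eps (aV e) /\
  arr_bounded eps (mAW e) /\ arr_bounded eps (aAW e) /\
  arr_bounded eps (mS e) /\ arr_bounded eps (aS e).

(* Computed result:
   U = fl(fl(G) H fl(G^T)), V = fl(fl(B^T) X fl(B)) (products evaluated left to right),
   W_ij = fl(U_ij V_ij), Shat = fl(fl(A^T) W fl(A)). *)
Definition tcU (no nh : nat) (p : 'I_(tcn no nh) -> R) (H : 'M[R]_nh)
    (e : tc_err no nh) : 'M[R]_(tcn no nh) :=
  flmul (flmul (flmx (tcG p) (eG e)) H (mGH e) (aGH e))
        (flmx (tcG p)^T (eGT e)) (mU e) (aU e).
Definition tcV (no nh : nat) (p : 'I_(tcn no nh) -> R) (X : 'M[R]_(tcn no nh))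
    (e : tc_err no nh) : 'M[R]_(tcn no nh) :=
  flmul (flmul (flmx (tcBT p) (eBT e)) X (mBX e) (aBX e))
        (flmx (tcBT p)^T (eB e)) (mV e) (aV e).
Definition tcW (no nh : nat) (p : 'I_(tcn no nh) -> R) (H : 'M[R]_nh)
    (X : 'M[R]_(tcn no nh)) (e : tc_err no nh) : 'M[R]_(tcn no nh) :=
  \matrix_(i, j) rnd (tcU p H e i j * tcV p X e i j) (eW e i j).
Definition tcShat (no nh : nat) (p : 'I_(tcn no nh) -> R) (H : 'M[R]_nh)
    (X : 'M[R]_(tcn no nh)) (e : tc_err no nh) : 'M[R]_no :=
  flmul (flmul (flmx (tcAT p) (eAT e)) (tcW p H X e) (mAW e) (aAW e))
        (flmx (tcAT p)^T (eA e)) (mS e) (aS e).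

Definition absmx (m k : nat) (A : 'M[R]_(m, k)) : 'M[R]_(m, k) := map_mx Num.norm A.
Definition norm1 (m k : nat) (A : 'M[R]_(m, k)) : R :=
  \big[Num.max/0]_(j < k) \sum_(i < m) `|A i j|.
Definition frob (m k : nat) (A : 'M[R]_(m, k)) : R :=
  Num.sqrt (\sum_(i < m) \sum_(j < k) A i j ^+ 2).

End TC.

(* Track every computed quantity x_hat by a magnitude bound b and a number k
   of roundings: |x| <= b and |x_hat - x| <= b ((1+eps)^k - 1).  Rounding
   increases k by one, sums keep k, products add the k's, so a dot product of
   length k of k_a- and k_b-accurate factors, computed by linear summation of
   rounded products, is (k_a + k_b + k)-accurate with bound the product of the
   bounds.  Following U, V, W and the two outer products gives
   k = 2 n_h + 4 n + 7 with bound |A^T| (|G||H||G^T| o |B^T||X||B|) |A|, and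
   (1+eps)^k - 1 = k eps + O(eps^2).  For the norm bound, the 1-norm is
   submultiplicative, the 1-norm of a Hadamard product is at most the product
   of the Frobenius norms (Cauchy-Schwarz), and the Frobenius norm is
   submultiplicative. *)
From HB Require Import structures.
From mathcomp Require Import all_boot all_order all_algebra.
From mathcomp Require Import ring zify.
Import Order.TTheory GRing.Theory Num.Theory.
Local Open Scope ring_scope.
Set Implicit Arguments. Unset Strict Implicit. Unset Printing Implicit Defensive.

Section RoundingErrorCalculus.
Variable R : rcfType.
Variable eps : R.
Hypothesis eps_ge0 : 0 <= eps.

Definition theta (k : nat) : R := (1 + eps) ^+ k - 1.

Lemma theta0 : theta 0 = 0.
Proof. by rewrite /theta expr0 subrr. Qed.

Lemma le_theta k k' : (k <= k')%N -> theta k <= theta k'.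
Proof. by move=> le_kk'; rewrite /theta lerD2r ler_weXn2l // lerDl. Qed.

Lemma thetaD k1 k2 : theta (k1 + k2) = theta k1 * theta k2 + theta k1 + theta k2.
Proof. by rewrite /theta exprD; ring. Qed.

Definition approx (k : nat) (x b xh : R) := `|x| <= b /\ `|xh - x| <= b * theta k.

Lemma approx_bound_ge0 k x b xh : approx k x b xh -> 0 <= b.
Proof. by case=> /(le_trans (normr_ge0 x)). Qed.

Lemma approx_exact x : approx 0 x `|x| x.
Proof. by split=> //; rewrite subrr theta0 mulr0 normr0. Qed.

Lemma approxW k k' x b xh : approx k x b xh -> (k <= k')%N -> approx k' x b xh.
Proof.
move=> [xb errx] le_kk'; split=> //; apply: le_trans errx _.
by rewrite ler_wpM2l ?le_theta // (le_trans _ xb).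
Qed.

Lemma approxD k x bx xh y byy yh :
  approx k x bx xh -> approx k y byy yh -> approx k (x + y) (bx + byy) (xh + yh).
Proof.
move=> [xb errx] [yb erry]; split; first exact: le_trans (ler_normD _ _) (lerD xb yb).
have -> : xh + yh - (x + y) = (xh - x) + (yh - y) by ring.
rewrite mulrDl.
by apply: le_trans (ler_normD _ _) (lerD errx erry).
Qed.

Lemma approxM k1 k2 x bx xh y byy yh :
  approx k1 x bx xh -> approx k2 y byy yh ->
  approx (k1 + k2) (x * y) (bx * byy) (xh * yh).
Proof.
move=> [xb errx] [yb erry]; split; first by rewrite normrM ler_pM.
have bx0 : 0 <= bx := le_trans (normr_ge0 x) xb.
have by0 : 0 <= byy := le_trans (normr_ge0 y) yb.
have -> : xh * yh - x * y = (xh - x) * (yh - y) + (xh - x) * y + x * (yh - y) by ring.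
have -> : bx * byy * theta (k1 + k2) =
    bx * theta k1 * (byy * theta k2) + bx * theta k1 * byy + bx * (byy * theta k2).
  by rewrite thetaD; ring.
apply: le_trans (ler_normD _ _) _; apply: le_trans (lerD (ler_normD _ _) (lexx _)) _.
by rewrite !normrM !lerD ?ler_pM.
Qed.

Lemma approx_rnd k x b xh d :
  approx k x b xh -> `|d| <= eps -> approx k.+1 x b (rnd xh d).
Proof.
move=> hx dle; have one_plus_d : approx 1 1 1 (1 + d).
  by rewrite /approx /theta normr1 expr1 mul1r !(addrC 1) !addrK.
by have := approxM hx one_plus_d; rewrite !mulr1 addn1.
Qed.

Section LinearSummation.
Variables (I : Type) (x b y d : I -> R) (k0 : nat).
Hypothesis approx_terms : forall l, approx k0 (x l) (b l) (y l).
Hypothesis d_le : forall l, `|d l| <= eps.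

Lemma approx_foldl_rnd (t : seq I) acc xa ba k : (k0 <= k)%N -> approx k xa ba acc ->
  approx (k + size t) (xa + \sum_(l <- t) x l) (ba + \sum_(l <- t) b l)
    (foldl (fun s yd => rnd (s + yd.1) yd.2) acc [seq (y l, d l) | l <- t]).
Proof.
elim: t acc xa ba k => [|l t IHt] acc xa ba k le_k0k hacc /=.
  by rewrite !big_nil !addr0 addn0.
rewrite !big_cons !addrA addnS -addSn; apply: IHt; first exact: leqW.
by apply: approx_rnd (d_le l); apply: approxD => //; exact: approxW (approx_terms l) _.
Qed.

(* The first term is not rounded, hence the [.-1]. *)
Lemma approx_lsum (r : seq I) :
  approx (k0 + size r).-1 (\sum_(l <- r) x l) (\sum_(l <- r) b l)
    (lsum [seq (y l, d l) | l <- r]).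
Proof.
case: r => [|l r] /=; first by rewrite !big_nil /approx subrr !normr0 mul0r.
by rewrite addnS !big_cons; exact: approx_foldl_rnd.
Qed.

End LinearSummation.

Definition mx_approx m n k (A bA Ah : 'M[R]_(m, n)) :=
  forall i j, approx k (A i j) (bA i j) (Ah i j).

Lemma mx_approx_exact m n (A : 'M[R]_(m, n)) : mx_approx 0 A (absmx A) A.
Proof. by move=> i j; rewrite mxE; exact: approx_exact. Qed.

Lemma mx_approx_flmx m n (A E : 'M[R]_(m, n)) :
  mx_bounded eps E -> mx_approx 1 A (absmx A) (flmx A E).
Proof. by move=> E_le i j; rewrite !mxE; exact: approx_rnd (approx_exact _) (E_le i j). Qed.

Lemma mx_approx_flmul m k q (A bA Ah : 'M[R]_(m, k)) (B bB Bh : 'M[R]_(k, q)) ka kb dm da :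
  mx_approx ka A bA Ah -> mx_approx kb B bB Bh ->
  arr_bounded eps dm -> arr_bounded eps da ->
  mx_approx (ka + kb + k) (A *m B) (bA *m bB) (flmul Ah Bh dm da).
Proof.
move=> hA hB dm_le da_le i j; rewrite !mxE.
have := @approx_lsum _ (fun l => A i l * B l j) (fun l => bA i l * bB l j)
  (fun l => rnd (Ah i l * Bh l j) (dm i j l)) (da i j) (ka + kb).+1
  (fun l => approx_rnd (approxM (hA i l) (hB l j)) (dm_le i j l)) (da_le i j) (enum 'I_k).
by rewrite size_enum_ord addSn /= !big_enum.
Qed.

Lemma mx_approx_tcShat (no nh : nat) (p : 'I_(tcn no nh) -> R)
    (H : 'M[R]_nh) (X : 'M[R]_(tcn no nh)) (e : tc_err R no nh) :
  err_bounded eps e ->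
  mx_approx (2 * nh + 4 * tcn no nh + 7) (tcS p H X)
    (absmx (tcAT p)
       *m hadamard (absmx (tcG p) *m absmx H *m absmx (tcG p)^T)
                   (absmx (tcBT p) *m absmx X *m absmx (tcBT p)^T)
       *m absmx (tcAT p)^T) (tcShat p H X e).
Proof.
move=> [eAT_le [eA_le [eG_le [eGT_le [eBT_le [eB_le [eW_le [mGH_le [aGH_le [mU_le
  [aU_le [mBX_le [aBX_le [mV_le [aV_le [mAW_le [aAW_le [mS_le aS_le]]]]]]]]]]]]]]]]]].
have hU := mx_approx_flmul (mx_approx_flmul (mx_approx_flmx (tcG p) eG_le)
  (mx_approx_exact H) mGH_le aGH_le) (mx_approx_flmx (tcG p)^T eGT_le) mU_le aU_le.
have hV := mx_approx_flmul (mx_approx_flmul (mx_approx_flmx (tcBT p) eBT_le)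
  (mx_approx_exact X) mBX_le aBX_le) (mx_approx_flmx (tcBT p)^T eB_le) mV_le aV_le.
have hW : mx_approx (2 * nh + 2 * tcn no nh + 5)
    (hadamard (tcG p *m H *m (tcG p)^T) (tcBT p *m X *m (tcBT p)^T))
    (hadamard (absmx (tcG p) *m absmx H *m absmx (tcG p)^T)
              (absmx (tcBT p) *m absmx X *m absmx (tcBT p)^T)) (tcW p H X e).
  move=> i j; have := approx_rnd (approxM (hU i j) (hV i j)) (eW_le i j).
  by rewrite /tcW /hadamard !mxE => /approxW; apply; lia.
have hS := mx_approx_flmul (mx_approx_flmul (mx_approx_flmx (tcAT p) eAT_le)
  hW mAW_le aAW_le) (mx_approx_flmx (tcAT p)^T eA_le) mS_le aS_le.
by move=> i j; apply: approxW (hS i j) _; lia.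
Qed.

End RoundingErrorCalculus.

Lemma theta_first_order (R : rcfType) (K : nat) : exists c : R, 0 <= c /\
  forall e : R, 0 <= e -> e <= 1 -> (1 + e) ^+ K - 1 <= K%:R * e + c * e ^+ 2.
Proof.
elim: K => [|K [c [c0 IHc]]].
  by exists 0; split=> // e _ _; rewrite expr0 subrr !mul0r add0r.
exists (K%:R + 2 * c); split=> [|e e0 e1]; first by rewrite addr_ge0 ?mulr_ge0.
have e2_ge_e3 : c * e ^+ 3 <= c * e ^+ 2.
  by rewrite ler_wpM2l // exprS ler_piMl ?exprn_ge0.
have step := ler_wpM2l (addr_ge0 ler01 e0) (IHc e e0 e1).
rewrite exprS -natr1; set t := (1 + e) ^+ K in step *.
have -> : (1 + e) * t - 1 = (1 + e) * (t - 1) + e by ring.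
have -> : (K%:R + 1) * e + (K%:R + 2 * c) * e ^+ 2 =
    (1 + e) * (K%:R * e + c * e ^+ 2) + e + (c * e ^+ 2 - c * e ^+ 3) by ring.
by rewrite -addrA lerD // lerDl subr_ge0.
Qed.

Section MatrixNorms.
Variable R : rcfType.

Lemma norm1_ge0 m k (A : 'M[R]_(m, k)) : 0 <= norm1 A.
Proof.
rewrite /norm1; elim/big_ind: _ => // [x y x0 _|j _]; first by rewrite le_max x0.
by apply: sumr_ge0 => i _; exact: normr_ge0.
Qed.

Lemma norm1_le m k (A : 'M[R]_(m, k)) c :
  0 <= c -> (forall j, \sum_i `|A i j| <= c) -> norm1 A <= c.
Proof. by move=> c0 col_le; rewrite /norm1; elim/big_ind: _ => // x y; rewrite ge_max => ->. Qed.

Lemma col_le_norm1 m k (A : 'M[R]_(m, k)) j : \sum_i `|A i j| <= norm1 A.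
Proof. by rewrite /norm1 (bigD1 j) //= le_max lexx. Qed.

Lemma entry_le_norm1 m k (A : 'M[R]_(m, k)) i j : `|A i j| <= norm1 A.
Proof.
apply: le_trans (col_le_norm1 A j); rewrite (bigD1 i) //= lerDl.
by apply: sumr_ge0 => l _; exact: normr_ge0.
Qed.

Lemma norm1_le_entrywise m k (D B : 'M[R]_(m, k)) s : 0 <= s ->
  (forall i j, `|D i j| <= `|B i j| * s) -> norm1 D <= norm1 B * s.
Proof.
move=> s0 D_le; apply: norm1_le => [|j]; first by rewrite mulr_ge0 ?norm1_ge0.
apply: le_trans (ler_sum _ (fun i _ => D_le i j)) _.
by rewrite -mulr_suml ler_wpM2r ?col_le_norm1.
Qed.

Lemma norm1_mul m k q (A : 'M[R]_(m, k)) (B : 'M[R]_(k, q)) :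
  norm1 (A *m B) <= norm1 A * norm1 B.
Proof.
apply: norm1_le => [|j]; first by rewrite mulr_ge0 ?norm1_ge0.
apply: le_trans (_ : \sum_i \sum_l `|A i l| * `|B l j| <= _).
  apply: ler_sum => i _; rewrite mxE; apply: le_trans (ler_norm_sum _ _ _) _.
  by apply: ler_sum => l _; rewrite normrM.
rewrite exchange_big /=; apply: le_trans (_ : \sum_l norm1 A * `|B l j| <= _).
  by apply: ler_sum => l _; rewrite -mulr_suml ler_wpM2r ?col_le_norm1.
by rewrite -mulr_sumr ler_wpM2l ?norm1_ge0 ?col_le_norm1.
Qed.

Lemma norm1_absmx m k (A : 'M[R]_(m, k)) : norm1 (absmx A) = norm1 A.
Proof. by apply: eq_bigr => j _; apply: eq_bigr => i _; rewrite mxE normr_id. Qed.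

Lemma frob_absmx m k (A : 'M[R]_(m, k)) : frob (absmx A) = frob A.
Proof.
by congr Num.sqrt; apply: eq_bigr => i _; apply: eq_bigr => j _; rewrite mxE real_normK // num_real.
Qed.

Lemma frob_ge0 m k (A : 'M[R]_(m, k)) : 0 <= frob A.
Proof. exact: sqrtr_ge0. Qed.

Lemma cauchy_schwarz k (a b : 'I_k -> R) :
  (\sum_i a i * b i) ^+ 2 <= (\sum_i a i ^+ 2) * (\sum_i b i ^+ 2).
Proof.
set A := \sum_i a i ^+ 2; set B := \sum_i b i ^+ 2; set P := \sum_i a i * b i.
have A0 : 0 <= A by apply: sumr_ge0 => i _; exact: sqr_ge0.
have [A_eq0|A_neq0] := eqVneq A 0.
  have a0 i : a i = 0.
    by apply/eqP; rewrite -sqrf_eq0; apply/eqP/(psumr_eq0P (fun i _ => sqr_ge0 (a i)) A_eq0).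
  by rewrite /P big1 ?A_eq0 ?expr0n ?mul0r // => i _; rewrite a0 mul0r.
have lagrange : \sum_i (A * b i - P * a i) ^+ 2 = A * (A * B - P ^+ 2).
  transitivity (\sum_i (A ^+ 2 * b i ^+ 2 - (2 * A * P) * (a i * b i) + P ^+ 2 * a i ^+ 2)).
    by apply: eq_bigr => i _; ring.
  by rewrite big_split sumrB /= -!mulr_sumr -/A -/B -/P; ring.
have : 0 <= A * (A * B - P ^+ 2).
  by rewrite -lagrange; apply: sumr_ge0 => i _; exact: sqr_ge0.
by rewrite pmulr_rge0 ?subr_ge0 // lt_def A_neq0.
Qed.

Lemma frob_mul m k q (A : 'M[R]_(m, k)) (B : 'M[R]_(k, q)) :
  frob (A *m B) <= frob A * frob B.
Proof.
rewrite /frob -sqrtrM; last by apply: sumr_ge0 => i _; apply: sumr_ge0 => j _; exact: sqr_ge0.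
apply: ler_wsqrtr; rewrite mulr_suml; apply: ler_sum => i _.
rewrite [X in _ <= _ * X]exchange_big mulr_sumr /=; apply: ler_sum => j _.
by rewrite mxE; exact: cauchy_schwarz.
Qed.

Lemma norm1_hadamard m k (P Q : 'M[R]_(m, k)) : norm1 (hadamard P Q) <= frob P * frob Q.
Proof.
have col_le_frob (M : 'M[R]_(m, k)) j : \sum_i `|M i j| ^+ 2 <= \sum_i \sum_l M i l ^+ 2.
  apply: ler_sum => i _; rewrite (bigD1 j) //= (real_normK (num_real _)) lerDl.
  by apply: sumr_ge0 => l _; exact: sqr_ge0.
apply: norm1_le => [|j]; first by rewrite mulr_ge0 ?frob_ge0.
have sumsq_ge0 (M : 'M[R]_(m, k)) : 0 <= \sum_i \sum_l M i l ^+ 2.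
  by apply: sumr_ge0 => i _; apply: sumr_ge0 => l _; exact: sqr_ge0.
have col_ge0 : 0 <= \sum_i `|hadamard P Q i j| by apply: sumr_ge0 => i _.
rewrite /frob -sqrtrM // -(ger0_norm col_ge0) -sqrtr_sqr ler_sqrt ?mulr_ge0 //.
under eq_bigr => i _ do rewrite mxE normrM.
apply: le_trans (cauchy_schwarz _ _) _.
by rewrite ler_pM ?col_le_frob ?sumr_ge0 // => i _; exact: sqr_ge0.
Qed.

Lemma norm1_absmx_hadamard_sandwich no n nh (A : 'M[R]_(no, n)) (G : 'M[R]_(n, nh)) (H : 'M[R]_nh)
    (G' : 'M[R]_(nh, n)) (B : 'M[R]_n) (X : 'M[R]_n) (B' : 'M[R]_n) (A' : 'M[R]_(n, no)) :
  norm1 (absmx A *m hadamard (absmx G *m absmx H *m absmx G')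
                             (absmx B *m absmx X *m absmx B') *m absmx A')
  <= norm1 A * frob G * frob H * frob G' * frob B * frob X * frob B' * norm1 A'.
Proof.
have frob_mul3 k1 k2 k3 k4 (M1 : 'M[R]_(k1, k2)) (M2 : 'M[R]_(k2, k3)) (M3 : 'M[R]_(k3, k4)) :
    frob (absmx M1 *m absmx M2 *m absmx M3) <= frob M1 * frob M2 * frob M3.
  apply: le_trans (frob_mul _ _) _; rewrite frob_absmx ler_wpM2r ?frob_ge0 //.
  by apply: le_trans (frob_mul _ _) _; rewrite !frob_absmx.
apply: le_trans (norm1_mul _ _) _; rewrite norm1_absmx ler_wpM2r ?norm1_ge0 //.
apply: le_trans (norm1_mul _ _) _; rewrite norm1_absmx -!mulrA ler_wpM2l ?norm1_ge0 //.
apply: le_trans (norm1_hadamard _ _) _; rewrite !mulrA.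
have := ler_pM (frob_ge0 _) (frob_ge0 _) (frob_mul3 _ _ _ _ G H G') (frob_mul3 _ _ _ _ B X B').
by rewrite !mulrA.
Qed.

End MatrixNorms.

Theorem mainTheorem4 (R : rcfType) (no nh : nat) (hno : (0 < no)%N) (hnh : (0 < nh)%N)
    (p : 'I_(tcn no nh) -> R) (hp : injective p)
    (H : 'M[R]_nh) (X : 'M[R]_(tcn no nh)) :
  exists (C eps0 : R), 0 < eps0 /\
    forall (eps : R) (e : tc_err R no nh),
      0 <= eps -> eps <= eps0 -> err_bounded eps e ->
      (forall i j,
         `|tcShat p H X e i j - tcS p H X i j|
           <= (absmx (tcAT p)
                *m hadamard (absmx (tcG p) *m absmx H *m absmx (tcG p)^T)
                            (absmx (tcBT p) *m absmx X *m absmx (tcBT p)^T)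
                *m absmx (tcAT p)^T) i j
              * ((2 * nh + 4 * tcn no nh + 7)%:R * eps)
            + C * eps ^+ 2)
      /\
      norm1 (tcShat p H X e - tcS p H X)
        <= norm1 (tcAT p) * frob (tcG p) * frob H * frob (tcG p)^T
           * frob (tcBT p) * frob X * frob (tcBT p)^T * norm1 (tcAT p)^T
           * ((2 * nh + 4 * tcn no nh + 7)%:R * eps)
         + C * eps ^+ 2.
Proof.
set b := (absmx (tcAT p) *m _ *m _); set K := (2 * nh + 4 * tcn no nh + 7)%N.
have [c [c0 theta_le]] := theta_first_order R K.
exists (c * norm1 b), 1; split=> [|eps e eps0 eps1 e_le]; first exact: ltr01.
have approx_S := mx_approx_tcShat eps0 p H X e_le.
have norm1_b :=
  norm1_absmx_hadamard_sandwich (tcAT p) (tcG p) H (tcG p)^T (tcBT p) X (tcBT p)^T (tcAT p)^T.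
rewrite -/b in approx_S norm1_b; clearbody b.
have b0 i j : 0 <= b i j := approx_bound_ge0 (approx_S i j).
have sub_entry i j :
    (tcShat p H X e - tcS p H X) i j = tcShat p H X e i j - tcS p H X i j by rewrite !mxE.
have err_le i j :
    `|(tcShat p H X e - tcS p H X) i j| <= `|b i j| * (K%:R * eps + c * eps ^+ 2).
  have [_ err] := approx_S i j.
  by rewrite sub_entry (ger0_norm (b0 i j)) (le_trans err) ?ler_wpM2l ?theta_le.
have b_le i j : b i j * c <= c * norm1 b.
  by rewrite mulrC ler_wpM2l // -[b i j]ger0_norm ?entry_le_norm1.
split=> [i j|].
  have := err_le i j; rewrite sub_entry (ger0_norm (b0 i j)) mulrDr mulrA => /le_trans; apply.
  by rewrite lerD2l mulrA ler_wpM2r ?sqr_ge0 ?b_le.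
apply: le_trans (norm1_le_entrywise _ err_le) _; first by rewrite addr_ge0 ?mulr_ge0.
rewrite mulrDr [norm1 b * (c * _)]mulrA [norm1 b * c]mulrC lerD2r.
by rewrite ler_wpM2r // mulr_ge0.
Qed.
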